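(* Let $h\ge 2$ be an integer and $\lambda_G,\lambda_L,\gamma>0$. Let $S=\{(a,b): a\ge 1,\ b\ge 1,\ a+b\le h\}\cup\{(0,1)^\ast\}$ and let $\mathbf{P}=(p_{s,t})_{s,t\in S}$, $\Phi=(\phi_{s,t})_{s,t\in S}$ be the matrices whose only non-zero entries are as follows: for $(a,b)\in S$ with $a\ge 1$, $p_{(a,b),(a-1,b+1)}=\frac{a\lambda_L}{a\lambda_L+\gamma}$ and $\phi_{(a,b),(a-1,b+1)}=\frac{a\lambda_L}{b(a\lambda_L+\gamma)}$ if $a>1$; $p_{(1,b),(0,1)^\ast}=\frac{\lambda_L}{\lambda_L+\gamma}$ and $\phi_{(1,b),(0,1)^\ast}=\frac{\lambda_L}{b(\lambda_L+\gamma)}$; $p_{(a,b),(a,b-1)}=\frac{(b-1)\gamma}{b(a\lambda_L+\gamma)}$ if $b\ge 2$; $\phi_{(a,b),(h-1,1)}=\frac{\lambda_G}{b(a\lambda_L+\gamma)}$; and $\phi_{(0,1)^\ast,(h-1,1)}=\lambda_G/\gamma$ (the row of $\mathbf{P}$ indexed by $(0,1)^\ast$ is zero). Let $\mathbf{M}=(\mathbf{I}-\mathbf{P})^{-1}\Phi$, let $\mu_G=\lambda_G/\gamma$, let $\mathbf{G}$ be the $S\times S$ matrix with $G_{s,(h-1,1)}=\mu_G$ for all $s\in S$ and all other entries $0$, and let $\mathbf{U}=(u_{s,t})=\mathbf{M}-\mathbf{G}$. For $i=0,1,\ldots,h-1$ let $\mu_i$ be the mean number of infectives in generation $i$ of the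 single-household epidemic described in the context. Then for $i=0,1,\ldots,h-1$, $$\mu_i=\sum_{(c,d)\in S}\big(\mathbf{U}^i\big)_{(h-1,1),(c,d)},$$ i.e. $\mu_i$ equals the sum of the row of $\mathbf{U}^i$ indexed by $(h-1,1)$ (with $\mathbf{U}^0=\mathbf{I}$).
   Context: Single-household Markovian SIR epidemic: a household of $h$ individuals initially contains one infective and $h-1$ susceptibles. Each infective remains infectious for an exponentially distributed time with rate $\gamma$ (independently), during which it makes contacts with each other given household member at the points of independent homogeneous Poisson processes of rate $\lambda_L$; a contacted susceptible immediately becomes infectious; recovered individuals play no further role. Generations: the initial infective is in generation $0$, and an individual infected by an infective of generation $i-1$ is in generation $i$. A state $(a,b)$ denotes a household with $a$ susceptibles and $b$ infectives; the states with no susceptibles are amalgamated into the single state $(0,1)^\ast$. The matrix $\mathbf{M}$ is the mean reproduction matrix, whose entry $m_{s,t}$ is the mean number of type-$t$ infectives generated by an individual who becomes infected as a member of a type-$s$ infectious unit (in the household epidemic model where, in addition, each infective makes global contacts at rate $\lambda_G$, each creating a new household infectious unit in state $(h-1,1)$). *)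

From HB Require Import structures.
From mathcomp Require Import all_boot all_order all_algebra.
Set Implicit Arguments. Unset Strict Implicit. Unset Printing Implicit Defensive.
Import Order.TTheory GRing.Theory Num.Theory.
Local Open Scope ring_scope.

(* State space S: Some (a,b) with a>=1, b>=1, a+b<=h; None = (0,1)^* *)
Definition St (h : nat) : finType :=
  option {p : ('I_h.+1 * 'I_h.+1)%type |
          [&& (0 < p.1)%N, (0 < p.2)%N & (p.1 + p.2 <= h)%N]}.

Definition stateA h (s : St h) : nat :=
  if s is Some p then nat_of_ord (val p).1 else 0%N.
Definition stateB h (s : St h) : nat :=
  if s is Some p then nat_of_ord (val p).2 else 1%N.
Definition isPair h (t : St h) (a b : nat) : bool :=
  [&& t != None, stateA t == a & stateB t == b].

Section Matrices.
Variables (R : realFieldType) (h : nat) (lG lL g : R).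

Definition pP (s t : St h) : R :=
  if s is None then 0 else
  let a := stateA s in let b := stateB s in
  (if (1 < a)%N && isPair t a.-1 b.+1 then a%:R * lL / (a%:R * lL + g) else 0)
  + (if (a == 1)%N && (t == None) then lL / (lL + g) else 0)
  + (if (2 <= b)%N && isPair t a b.-1
     then (b.-1)%:R * g / (b%:R * (a%:R * lL + g)) else 0).

Definition pPhi (s t : St h) : R :=
  if s is None then (if isPair t h.-1 1 then lG / g else 0) else
  let a := stateA s in let b := stateB s in
  (if (1 < a)%N && isPair t a.-1 b.+1
     then a%:R * lL / (b%:R * (a%:R * lL + g)) else 0)
  + (if (a == 1)%N && (t == None) then lL / (b%:R * (lL + g)) else 0)
  + (if isPair t h.-1 1 then lG / (b%:R * (a%:R * lL + g)) else 0).

Definition Pmat : 'M[R]_#|St h| :=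
  \matrix_(i, j) pP (enum_val i) (enum_val j).
Definition Phimat : 'M[R]_#|St h| :=
  \matrix_(i, j) pPhi (enum_val i) (enum_val j).
Definition Mmat : 'M[R]_#|St h| := invmx (1%:M - Pmat) *m Phimat.
Definition Gmat : 'M[R]_#|St h| :=
  \matrix_(i, j) (if isPair (enum_val j) h.-1 1 then lG / g else 0).
Definition Umat : 'M[R]_#|St h| := Mmat - Gmat.

(* Single-household Markovian SIR epidemic, described through its embedded
   jump chain.  State: a = number of susceptibles, inf = counts of current
   infectives by generation (inf`_j = number of generation-j infectives).
   From a state with B = sumn inf > 0 infectives the total event rate is
   B (a lL + g): a generation-j infective infects some susceptible at rate
   inf_j * a * lL (new infective of generation j+1) and recovers at rate
   inf_j * g.  ev fuel i a inf = expected number of future infections of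
   generation i. *)
Fixpoint ev (fuel i a : nat) (inf : seq nat) : R :=
  match fuel with
  | 0%N => 0
  | f.+1 =>
    let B := sumn inf in
    if B == 0%N then 0 else
    let T := B%:R * (a%:R * lL + g) in
    \sum_(j < size inf)
      ( (nth 0%N inf j * a)%:R * lL / T
          * ((j.+1 == i)%:R + ev f i a.-1 (incr_nth inf j.+1))
      + (nth 0%N inf j)%:R * g / T
          * ev f i a (set_nth 0%N inf j (nth 0%N inf j).-1) )
  end.

(* mean number of infectives of generation i, initial state: h-1 susceptibles
   and one infective of generation 0. The measure 2a + #infectives strictly
   decreases at each jump, so fuel 2h suffices. *)
Definition mu (i : nat) : R := (i == 0%N)%:R + ev (2 * h) i h.-1 [:: 1%N].

End Matrices.

From mathcomp Require Import all_boot all_order all_algebra.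
From mathcomp Require Import zify ring.
Set Implicit Arguments. Unset Strict Implicit. Unset Printing Implicit Defensive.
Import Order.TTheory GRing.Theory Num.Theory.
Local Open Scope ring_scope.

(* Every transition of P lowers 2a + b, so I - P is invertible and
   (I - P) U = Phi - (I - P) G.  In the row of (a,b) the global-infection entry
   of Phi equals (lG/g) (1 - sum_t P_{(a,b),t}), so it cancels against (I - P) G:
   U is the mean next-generation matrix of within-household infections alone.
   Hence the row sums V_k(a,b) of U^k satisfy the first-step equation
     b (a lL + g) V_{k+1}(a,b) = a lL V_k(a-1,b+1) + b a lL V_{k+1}(a-1,b+1)
                                 + (b-1) g V_{k+1}(a,b-1),
   which is also the equation of the jump chain of the epidemic once every
   current generation-l infective is credited with V_{i-l} generation-i cases.
   Induction on the number of remaining events gives mu_i = V_i(h-1,1). *)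

Lemma sumn_incr_nth (s : seq nat) j : sumn (incr_nth s j) = (sumn s).+1.
Proof.
elim: s j => [|x s IHs] [|j] //=; rewrite ?addSn ?IHs ?addnS //.
by rewrite add0n; elim: j => //= j ->.
Qed.

Lemma nth_leq_sumn (s : seq nat) l : (nth 0%N s l <= sumn s)%N.
Proof. by elim: s l => [|x s IHs] [|l] //=; rewrite ?leq_addr // (leq_trans (IHs l)) ?leq_addl. Qed.

Lemma nth_sumn0 (s : seq nat) l : sumn s = 0%N -> nth 0%N s l = 0%N.
Proof. by move=> s0; have := nth_leq_sumn s l; rewrite s0 leqn0 => /eqP. Qed.

Section WeightedSum.
Variable R : pzRingType.
Implicit Types (s : seq nat) (F G : nat -> R).

Definition wsum s F : R := \sum_(j < size s) (nth 0%N s j)%:R * F j.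

Lemma wsum_widen s F m : (size s <= m)%N ->
  wsum s F = \sum_(j < m) (nth 0%N s j)%:R * F j.
Proof.
move=> le_s_m; rewrite /wsum (big_ord_widen m (fun j => (nth 0%N s j)%:R * F j)) //.
rewrite big_mkcond; apply: eq_bigr => j _; case: ltnP => // /(nth_default 0%N) ->.
by rewrite mul0r.
Qed.

Lemma wsumD s F G : wsum s (fun j => F j + G j) = wsum s F + wsum s G.
Proof. by rewrite /wsum -big_split; apply: eq_bigr => j _; rewrite mulrDr. Qed.

Lemma wsumB s F G : wsum s (fun j => F j - G j) = wsum s F - wsum s G.
Proof. by rewrite /wsum -sumrB; apply: eq_bigr => j _; rewrite mulrBr. Qed.

Lemma wsumZ s c F : wsum s (fun j => c * F j) = c * wsum s F.
Proof.
by rewrite /wsum mulr_sumr; apply: eq_bigr => j _; rewrite !mulr_natl mulrnAr.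
Qed.

Lemma wsum_cst s c : wsum s (fun=> c) = (sumn s)%:R * c.
Proof.
rewrite /wsum -mulr_suml; congr (_ * _).
by elim: s => [|x s IHs]; rewrite ?big_ord0 // big_ord_recl /= IHs natrD.
Qed.

Lemma sum_ord_delta n i F : (i < n)%N -> \sum_(j < n) (j == i :> nat)%:R * F j = F i.
Proof.
move=> lt_i_n; rewrite (bigD1 (Ordinal lt_i_n)) //= eqxx mul1r big1 ?addr0 // => j.
by rewrite -val_eqE => /negbTE /= ->; rewrite mul0r.
Qed.

Lemma wsum_delta s i : wsum s (fun j => (j == i)%:R) = (nth 0%N s i)%:R.
Proof.
rewrite (@wsum_widen _ _ (size s + i.+1)) ?leq_addr //.
under eq_bigr do rewrite mulr_natr -mulr_natl.
by rewrite (sum_ord_delta (fun j => (nth 0%N s j)%:R)) //; lia.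
Qed.

Lemma wsum_incr_nth s m F : wsum (incr_nth s m) F = wsum s F + F m.
Proof.
have le_s : (size s <= size s + m.+1)%N by rewrite leq_addr.
have le_incr : (size (incr_nth s m) <= size s + m.+1)%N.
  by rewrite size_incr_nth; case: ifP; rewrite ?leq_addl.
rewrite !(wsum_widen _ le_incr, wsum_widen _ le_s).
under eq_bigr do rewrite nth_incr_nth natrD mulrDl eq_sym.
by rewrite big_split /= addrC (sum_ord_delta F) //; lia.
Qed.

Lemma wsum_decr_nth s j F : (0 < nth 0%N s j)%N ->
  wsum (set_nth 0%N s j (nth 0%N s j).-1) F = wsum s F - F j.
Proof.
move=> s_j_gt0; set t := set_nth _ _ _ _.
suff -> : s = incr_nth t j by rewrite wsum_incr_nth addrK.
have lt_j_s : (j < size s)%N by rewrite ltnNge; apply: contraTN s_j_gt0 => /(nth_default 0%N) ->.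
apply: (@eq_from_nth _ 0%N).
  by rewrite size_incr_nth /t size_set_nth (maxn_idPr lt_j_s) lt_j_s.
move=> l _; rewrite nth_incr_nth /t nth_set_nth /=.
by have [->|//] := eqVneq l j; rewrite ?eqxx add1n prednK.
Qed.

Lemma wsum_sumn0 s F : sumn s = 0%N -> wsum s F = 0.
Proof. by move=> s0; rewrite /wsum big1 // => j _; rewrite nth_sumn0 // mul0r. Qed.

End WeightedSum.

Lemma unitmx_1_sub_descending (R : fieldType) n (A : 'M[R]_n) (m : 'I_n -> nat) :
  (forall i j, A i j != 0 -> (m j < m i)%N) -> 1%:M - A \in unitmx.
Proof.
move=> descA.
have ker0 p (v : 'M[R]_(n, p)) : (1%:M - A) *m v = 0 -> v = 0.
  move=> Av; apply/matrixP => i k; rewrite mxE.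
  have vE j : v j k = \sum_l A j l * v l k.
    by apply/eqP; rewrite -subr_eq0; move/matrixP/(_ j k): Av; rewrite mulmxBl mul1mx !mxE => ->.
  elim: {i}(m i).+1 {-2}i (ltnSn (m i)) => // N IHN i lt_i.
  rewrite vE big1 // => j _; have [-> | /descA lt_j] := eqVneq (A i j) 0; first by rewrite mul0r.
  by rewrite IHN ?mulr0 // (leq_trans lt_j).
rewrite -unitmx_tr -row_free_unit -kermx_eq0; apply/eqP/trmx_inj; rewrite trmx0.
by apply: ker0; rewrite -[X in X *m _]trmxK -trmx_mul mulmx_ker trmx0.
Qed.

Lemma mulmx_enum_matrixE (R : pzSemiRingType) (T : finType) (p : T -> T -> R) k
    (y : 'M[R]_(#|T|, k)) s j :
  ((\matrix_(i, l) p (enum_val i) (enum_val l)) *m y) (enum_rank s) j =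
  \sum_t p s t * y (enum_rank t) j.
Proof.
rewrite mxE (reindex enum_rank) /=; last exact: onW_bij (enum_rank_bij T).
by apply: eq_bigr => t _; rewrite mxE !enum_rankK.
Qed.

Section HouseholdEpidemic.
Variables (R : realFieldType) (h : nat) (lG lL g : R).
Hypotheses (h_ge2 : (2 <= h)%N) (lL_gt0 : 0 < lL) (g_gt0 : 0 < g).

Local Notation n := #|St h|.
Local Notation idx := (@enum_rank (St h)).

Lemma rate_gt0 a : 0 < a%:R * lL + g.
Proof. by rewrite ltr_wpDl // mulr_ge0 // ltW. Qed.

(* Pairs outside S, in particular (0, b), are sent to (0,1)^*, which is exactly
   where an infection in state (1, b) leads. *)
Definition st (a b : nat) : St h := insub (inord a : 'I_h.+1, inord b : 'I_h.+1).

Lemma st0n b : st 0 b = None.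
Proof. by rewrite /st insubF //= inordK. Qed.

Lemma st_valid a b : (0 < a)%N -> (0 < b)%N -> (a + b <= h)%N ->
  [/\ st a b != None, stateA (st a b) = a & stateB (st a b) = b].
Proof.
move=> a_gt0 b_gt0 le_ab_h.
have [le_a_h le_b_h] : (a < h.+1)%N /\ (b < h.+1)%N by lia.
rewrite /st; case: insubP => [p _ Ep | /negP[]]; last by rewrite /= !inordK // a_gt0 b_gt0.
by rewrite /stateA /stateB Ep /= !inordK.
Qed.

Lemma st_stateAB (s : St h) : s != None -> s = st (stateA s) (stateB s).
Proof.
by case: s => [p|] // _; rewrite /st /stateA /stateB !inord_val -surjective_pairing valK.
Qed.

Lemma isPair_st t a b : (0 < a)%N -> (0 < b)%N -> (a + b <= h)%N ->
  isPair t a b = (t == st a b).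
Proof.
move=> a_gt0 b_gt0 le_ab_h; have [stN stA stB] := st_valid a_gt0 b_gt0 le_ab_h.
apply/and3P/eqP => [[tN /eqP tA /eqP tB] | ->]; last by rewrite stA stB.
by rewrite (st_stateAB tN) tA tB.
Qed.

Lemma sum_isPair a b x (F : St h -> R) : (0 < a)%N -> (0 < b)%N -> (a + b <= h)%N ->
  \sum_t (if isPair t a b then x else 0) * F t = x * F (st a b).
Proof.
move=> a_gt0 b_gt0 le_ab_h; under eq_bigr do rewrite isPair_st //.
by rewrite (bigD1 (st a b)) //= ?eqxx big1 ?addr0 // => t /negbTE->; rewrite mul0r.
Qed.

Lemma sum_if_isPair (c : bool) a b x (F : St h -> R) :
  (c -> [/\ (0 < a)%N, (0 < b)%N & (a + b <= h)%N]) ->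
  \sum_t (if c && isPair t a b then x else 0) * F t = if c then x * F (st a b) else 0.
Proof.
case: c => [/(_ isT)[] | _]; first exact: sum_isPair.
by rewrite big1 // => t; rewrite mul0r.
Qed.

Lemma sum_if_None (c : bool) x (F : St h -> R) :
  \sum_t (if c && (t == None) then x else 0) * F t = if c then x * F None else 0.
Proof.
case: c => /=; last by rewrite big1 // => t; rewrite mul0r.
by rewrite (bigD1 None) //= ?eqxx big1 ?addr0 // => t /negbTE->; rewrite mul0r.
Qed.

Lemma sum_pP_st a b (F : St h -> R) : (0 < a)%N -> (0 < b)%N -> (a + b <= h)%N ->
  \sum_t pP lL g (st a b) t * F t =
  a%:R * lL / (a%:R * lL + g) * F (st a.-1 b.+1)
  + (b.-1)%:R * g / (b%:R * (a%:R * lL + g)) * F (st a b.-1).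
Proof.
move=> a_gt0 b_gt0 le_ab_h; have [stN stA stB] := st_valid a_gt0 b_gt0 le_ab_h.
rewrite /pP; case: (st a b) stN stA stB => [p|] // _ -> -> /=.
under eq_bigr do rewrite !mulrDl.
rewrite !big_split /= sum_if_None !sum_if_isPair; try by move=> ?; split; lia.
have [-> | a_gt1] : a = 1%N \/ (1 < a)%N by lia.
  rewrite st0n mul1r /= add0r.
  by case: b b_gt0 le_ab_h => [|[|b]] //= _ _; rewrite !mul0r addr0.
rewrite a_gt1 (gtn_eqF a_gt1) addr0.
by case: b b_gt0 le_ab_h => [|[|b]] //= _ _; rewrite !mul0r addr0.
Qed.

Lemma sum_pPhi_st a b (F : St h -> R) : (0 < a)%N -> (0 < b)%N -> (a + b <= h)%N ->
  \sum_t pPhi lG lL g (st a b) t * F t =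
  a%:R * lL / (b%:R * (a%:R * lL + g)) * F (st a.-1 b.+1)
  + lG / (b%:R * (a%:R * lL + g)) * F (st h.-1 1).
Proof.
move=> a_gt0 b_gt0 le_ab_h; have [stN stA stB] := st_valid a_gt0 b_gt0 le_ab_h.
rewrite /pPhi; case: (st a b) stN stA stB => [p|] // _ -> -> /=.
under eq_bigr do rewrite !mulrDl.
rewrite !big_split /= sum_if_None sum_if_isPair ?sum_isPair; try by [lia | move=> ?; split; lia].
have [-> | a_gt1] : a = 1%N \/ (1 < a)%N by lia.
  by rewrite st0n mul1r /= add0r.
by rewrite a_gt1 (gtn_eqF a_gt1) addr0.
Qed.

Lemma sub1_rowsum_pP_st a b : (0 < a)%N -> (0 < b)%N -> (a + b <= h)%N ->
  1 - \sum_t pP lL g (st a b) t = g / (b%:R * (a%:R * lL + g)).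
Proof.
move=> a_gt0 b_gt0 le_ab_h.
under eq_bigr do rewrite -[pP _ _ _ _]mulr1.
rewrite sum_pP_st // !mulr1 -subn1 natrB //.
by field; rewrite pnatr_eq0 -lt0n b_gt0 gt_eqF ?rate_gt0.
Qed.

Lemma sum_pP_None (F : St h -> R) : \sum_t pP lL g None t * F t = 0.
Proof. by rewrite big1 // => t _; rewrite mul0r. Qed.

Lemma sum_pPhi_None (F : St h -> R) : \sum_t pPhi lG lL g None t * F t = lG / g * F (st h.-1 1).
Proof. by rewrite sum_isPair //; lia. Qed.

Definition events_left (s : St h) : nat := 2 * stateA s + stateB s.

Lemma pP_neq0_events_left s t : pP lL g s t != 0 -> (events_left t < events_left s)%N.
Proof.
case: s => [p|]; last by rewrite /pP eqxx.
have /and3P[a_gt0 b_gt0 _] := valP p; rewrite /pP /events_left /=.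
case: ifP => [/andP[? /and3P[_ /eqP-> /eqP->]] _ | _]; first lia.
case: ifP => [/andP[? /eqP->] _ | _]; first by rewrite /=; lia.
case: ifP => [/andP[? /and3P[_ /eqP-> /eqP->]] _ | _]; first lia.
by rewrite !addr0 eqxx.
Qed.

Local Notation P := (Pmat h lL g).
Local Notation Phi := (Phimat h lG lL g).
Local Notation G := (Gmat h lG g).
Local Notation U := (Umat h lG lL g).

Lemma unitmx_1_sub_Pmat : 1%:M - P \in unitmx.
Proof.
apply: (@unitmx_1_sub_descending _ _ _ (events_left \o enum_val)) => i j.
by rewrite mxE; apply: pP_neq0_events_left.
Qed.

Lemma mulmx_Umat k (y : 'M[R]_(n, k)) :
  (1%:M - P) *m (U *m y) = Phi *m y - (1%:M - P) *m (G *m y).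
Proof.
rewrite /Umat /Mmat [(_ - G) *m y]mulmxBl mulmxBr !mulmxA mulmxV ?mul1mx //.
exact: unitmx_1_sub_Pmat.
Qed.

Lemma mulmx_1_sub_PmatE k (y : 'M[R]_(n, k)) s j :
  ((1%:M - P) *m y) (idx s) j = y (idx s) j - \sum_t pP lL g s t * y (idx t) j.
Proof. by rewrite mulmxBl mul1mx [LHS]mxE [X in _ + X]mxE mulmx_enum_matrixE. Qed.

Lemma mulmx_GmatE k (y : 'M[R]_(n, k)) s j :
  (G *m y) (idx s) j = lG / g * y (idx (st h.-1 1)) j.
Proof.
rewrite (mulmx_enum_matrixE (fun _ t => if isPair t h.-1 1 then lG / g else 0)).
by rewrite sum_isPair //; lia.
Qed.

Lemma mulmx_Umat_entry k (y : 'M[R]_(n, k)) s j :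
  (U *m y) (idx s) j - \sum_t pP lL g s t * (U *m y) (idx t) j =
  \sum_t pPhi lG lL g s t * y (idx t) j
  - lG / g * y (idx (st h.-1 1)) j * (1 - \sum_t pP lL g s t).
Proof.
have := congr1 (fun M : 'M[R]_(n, k) => M (idx s) j) (mulmx_Umat y).
rewrite /= mulmx_1_sub_PmatE => ->; rewrite [LHS]mxE [X in _ + X]mxE.
rewrite mulmx_enum_matrixE mulmx_1_sub_PmatE mulmx_GmatE mulrBr mulr1 mulr_sumr.
by congr (_ - (_ - _)); apply: eq_bigr => t _; rewrite mulmx_GmatE mulrC.
Qed.

Lemma mulmx_Umat_None k (y : 'M[R]_(n, k)) j : (U *m y) (idx None) j = 0.
Proof.
have := mulmx_Umat_entry y None j.
by rewrite sum_pP_None sum_pPhi_None big1 // !subr0 mulr1 subrr.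
Qed.

Lemma mulmx_Umat_st k (y : 'M[R]_(n, k)) j a b : (0 < b)%N -> (a + b <= h)%N ->
  (U *m y) (idx (st a b)) j =
  a%:R * lL / (a%:R * lL + g) * (U *m y) (idx (st a.-1 b.+1)) j
  + (b.-1)%:R * g / (b%:R * (a%:R * lL + g)) * (U *m y) (idx (st a b.-1)) j
  + a%:R * lL / (b%:R * (a%:R * lL + g)) * y (idx (st a.-1 b.+1)) j.
Proof.
move=> b_gt0 le_ab_h; have [-> | a_gt0] := posnP a.
  by rewrite !st0n mulmx_Umat_None !mul0r !mulr0 !addr0.
have := mulmx_Umat_entry y (st a b) j.
rewrite (sum_pP_st (fun t => (U *m y) (idx t) j)) // (sum_pPhi_st (fun t => y (idx t) j)) //.
rewrite sub1_rowsum_pP_st // => /eqP; rewrite subr_eq => /eqP ->.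
have b_neq0 : b%:R != 0 :> R by rewrite pnatr_eq0 -lt0n.
have pred_b : (b.-1)%:R = b%:R - 1 :> R by rewrite -subn1 natrB.
by rewrite pred_b; field; rewrite b_neq0 !gt_eqF ?rate_gt0.
Qed.

Definition genmean k (s : St h) : R := \sum_t (U ^+ k) (idx s) (idx t).

Lemma genmeanE k s : genmean k s = (U ^+ k *m (const_mx 1 : 'cV[R]_n)) (idx s) 0.
Proof.
rewrite mxE (reindex idx) /=; last exact: onW_bij (enum_rank_bij _).
by apply: eq_bigr => t _; rewrite mxE mulr1.
Qed.

Lemma genmean0 s : genmean 0 s = 1.
Proof. by rewrite genmeanE expr0 mul1mx mxE. Qed.

Lemma genmeanS k a b : (0 < b)%N -> (a + b <= h)%N ->
  b%:R * (a%:R * lL + g) * genmean k.+1 (st a b) =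
  a%:R * lL * genmean k (st a.-1 b.+1) + b%:R * a%:R * lL * genmean k.+1 (st a.-1 b.+1)
  + (b.-1)%:R * g * genmean k.+1 (st a b.-1).
Proof.
move=> b_gt0 le_ab_h; rewrite !genmeanE exprS -mulmxE -!mulmxA.
rewrite (mulmx_Umat_st _ _ b_gt0 le_ab_h).
have b_neq0 : b%:R != 0 :> R by rewrite pnatr_eq0 -lt0n.
by field; rewrite b_neq0 gt_eqF ?rate_gt0.
Qed.

(* Mean number of generation-i cases descending, inside the household, from one
   generation-l infective of a household in state s, itself included when l = i. *)
Definition descmean i l (s : St h) : R := if (l <= i)%N then genmean (i - l) s else 0.

Lemma descmean_rec i l a b : (0 < b)%N -> (a + b <= h)%N ->
  b%:R * (a%:R * lL + g) * descmean i l (st a b) =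
  a%:R * lL * descmean i l.+1 (st a.-1 b.+1)
  + b%:R * a%:R * lL * descmean i l (st a.-1 b.+1)
  + (b.-1)%:R * g * descmean i l (st a b.-1) + g * (l == i)%:R.
Proof.
move=> b_gt0 le_ab_h; rewrite /descmean; case: (ltngtP l i) => [lt_li | lt_il | ->].
- by rewrite -(subnSK lt_li) genmeanS // mulr0 addr0.
- by rewrite !mulr0 !addr0.
by rewrite /= subnn !genmean0 -subn1 natrB //; ring.
Qed.

Lemma wsum_descmean s i a : (0 < sumn s)%N -> (a + sumn s <= h)%N ->
  let B := sumn s in
  wsum s (fun l => descmean i l (st a B)) =
  (B%:R * (a%:R * lL + g))^-1 *
  (a%:R * lL * wsum s (fun l => descmean i l.+1 (st a.-1 B.+1))
   + B%:R * a%:R * lL * wsum s (fun l => descmean i l (st a.-1 B.+1))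
   + (B.-1)%:R * g * wsum s (fun l => descmean i l (st a B.-1))
   + g * (nth 0%N s i)%:R).
Proof.
move=> B_gt0 le_aB_h B; have B_neq0 : B%:R != 0 :> R by rewrite pnatr_eq0 -lt0n.
rewrite -wsum_delta -!wsumZ -!wsumD -wsumZ; apply: eq_bigr => j _; congr (_ * _).
by rewrite -descmean_rec // mulKf // mulf_neq0 // gt_eqF ?rate_gt0.
Qed.

Definition ev_descmean_at i f : Prop := forall a s,
  (2 * a + sumn s <= f)%N -> (a + sumn s <= h)%N ->
  (nth 0%N s i)%:R + ev lL g f i a s = wsum s (fun l => descmean i l (st a (sumn s))).

Section FuelStep.
Variables (i f : nat).
Hypothesis IHf : ev_descmean_at i f.

Lemma ev_after_infection a s j :
  (0 < a)%N -> (2 * a + sumn s <= f.+1)%N -> (a + sumn s <= h)%N ->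
  (j.+1 == i)%:R + ev lL g f i a.-1 (incr_nth s j.+1) =
  wsum s (fun l => descmean i l (st a.-1 (sumn s).+1))
  + descmean i j.+1 (st a.-1 (sumn s).+1) - (nth 0%N s i)%:R.
Proof.
move=> a_gt0 le_f le_h; have := @IHf a.-1 (incr_nth s j.+1).
rewrite sumn_incr_nth nth_incr_nth natrD wsum_incr_nth => /(_ ltac:(lia) ltac:(lia)) E.
by apply: (addIr (nth 0%N s i)%:R); rewrite subrK -E addrAC.
Qed.

Lemma ev_after_recovery a s j :
  (0 < nth 0%N s j)%N -> (2 * a + sumn s <= f.+1)%N -> (a + sumn s <= h)%N ->
  ev lL g f i a (set_nth 0%N s j (nth 0%N s j).-1) =
  wsum s (fun l => descmean i l (st a (sumn s).-1))
  - descmean i j (st a (sumn s).-1) - (nth 0%N s i)%:R + (j == i)%:R.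
Proof.
move=> s_j_gt0 le_f le_h; have le_sj_s := nth_leq_sumn s j.
have := @IHf a (set_nth 0%N s j (nth 0%N s j).-1).
have -> : sumn (set_nth 0%N s j (nth 0%N s j).-1) = (sumn s).-1.
  by rewrite sumn_set_nth0; lia.
have -> : (nth 0%N (set_nth 0%N s j (nth 0%N s j).-1) i)%:R
          = (nth 0%N s i)%:R - (j == i)%:R :> R.
  rewrite nth_set_nth /=; have [->|_] := eqVneq i j; last by rewrite subr0.
  by rewrite -subn1 natrB.
rewrite wsum_decr_nth // => /(_ ltac:(lia) ltac:(lia)) E.
by apply: (addrI ((nth 0%N s i)%:R - (j == i)%:R)); rewrite E; ring.
Qed.

Lemma ev_descmean_atS : ev_descmean_at i f.+1.
Proof.
move=> a s le_f le_h /=; case: eqP => [s0 | /eqP s_neq0].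
  by rewrite nth_sumn0 ?wsum_sumn0 ?addr0.
set T := (sumn s)%:R * (a%:R * lL + g).
set D1 := fun l => descmean i l (st a.-1 (sumn s).+1).
set D2 := fun l => descmean i l (st a (sumn s).-1).
set si := (nth 0%N s i)%:R.
have T_neq0 : T != 0 by rewrite mulf_neq0 ?pnatr_eq0 // gt_eqF ?rate_gt0.
have -> : \sum_(j < size s)
      ((nth 0%N s j * a)%:R * lL / T * ((j.+1 == i)%:R + ev lL g f i a.-1 (incr_nth s j.+1))
       + (nth 0%N s j)%:R * g / T * ev lL g f i a (set_nth 0%N s j (nth 0%N s j).-1))
    = wsum s (fun j => T^-1 * (a%:R * lL * (wsum s D1 - si) + g * (wsum s D2 - si)
                               + (a%:R * lL * D1 j.+1 - g * D2 j + g * (j == i)%:R))).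
  apply: eq_bigr => j _; have [-> | s_j_gt0] := posnP (nth 0%N s j).
    by rewrite mul0n !mul0r add0r.
  rewrite ev_after_recovery // /D1 /D2 /si; have [-> | a_gt0] := posnP a.
    by rewrite muln0 !mul0r add0r; field.
  by rewrite ev_after_infection // natrM; field.
rewrite wsumZ wsumD wsum_cst wsumD wsumB !wsumZ wsum_delta wsum_descmean; try lia.
rewrite /T /D1 /D2 /si -[(sumn s).-1]subn1 natrB; last lia.
by field; rewrite gt_eqF ?rate_gt0 //= pnatr_eq0.
Qed.

End FuelStep.

Lemma ev_descmean f i : ev_descmean_at i f.
Proof.
elim: f => [|f]; last exact: ev_descmean_atS.
by move=> a s le_0 _; rewrite nth_sumn0 ?wsum_sumn0 ?addr0 //; lia.
Qed.

Lemma mu_genmean i : mu h lL g i = genmean i (st h.-1 1).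
Proof.
rewrite /mu (_ : nat_of_bool (i == 0%N) = nth 0%N [:: 1%N] i); last first.
  by case: i => //= j; rewrite nth_nil.
rewrite ev_descmean /=; try lia.
by rewrite /wsum big_ord1 /= mul1r /descmean leq0n subn0.
Qed.

End HouseholdEpidemic.

Theorem lemma3p2 (R : realFieldType) (h : nat) (lG lL g : R) :
  (2 <= h)%N -> 0 < lG -> 0 < lL -> 0 < g ->
  forall s0 : St h, stateA s0 = h.-1 -> stateB s0 = 1%N ->
  forall i : nat, (i < h)%N ->
    mu h lL g i =
    \sum_(t : St h) (Umat h lG lL g ^+ i) (enum_rank s0) (enum_rank t).
Proof.
move=> h_ge2 _ lL_gt0 g_gt0 s0 s0A s0B i _.
have s0_st : s0 = st h h.-1 1.
  have s0_neq_None : s0 != None by apply/eqP => s0N; move: s0A; rewrite s0N /=; lia.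
  by rewrite (st_stateAB s0_neq_None) s0A s0B.
by rewrite (mu_genmean lG h_ge2 lL_gt0 g_gt0) s0_st.
Qed.
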